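(* For every $\theta\in[-\pi,\pi]^d\setminus\{0\}$, the spectral radius of the complex matrix $\widehat{\mu}(\theta)$ is strictly smaller than $1$.
   Context: Fix integers $d,p\ge 1$. Let $(Z_n)=(A_n,M_n)$ be a Markov-additive process on $\mathbb{Z}^d\times\{1,\dots,p\}$, i.e. a Markov chain with $\mathbb{P}_{(x,i)}((A_1,M_1)=(x',i'))=\mathbb{P}_{(0,i)}((A_1,M_1)=(x'-x,i'))$ for all $x,x',i,i'$, with jump matrix of sub-probability measures $\mu_{i,j}(x)=\mathbb{P}_{(0,i)}((A_1,M_1)=(x,j))$. It is assumed irreducible, aperiodic (for every state $(x,i)$, $\gcd\{n\ge1:\mathbb{P}_{(x,i)}(Z_n=(x,i))>0\}=1$), and with finite exponential moments ($\sum_x e^{\alpha\|x\|}\mu_{i,j}(x)<\infty$ for all $i,j$, $\alpha>0$). The Fourier transform is the $p\times p$ complex matrix $\widehat\mu(\theta)_{i,j}=\sum_{x\in\mathbb{Z}^d}e^{\mathbf{i}x\cdot\theta}\mu_{i,j}(x)$, $\theta\in\mathbb{R}^d$. *)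

From HB Require Import structures.
From mathcomp Require Import all_boot all_order all_algebra.
From mathcomp.real_closed Require Import complex.
From mathcomp Require Import all_classical all_reals.
From mathcomp Require Import ereal topology normedtype sequences numfun esum exp trigo.

Set Implicit Arguments.
Unset Strict Implicit.
Unset Printing Implicit Defensive.
Import Order.TTheory GRing.Theory Num.Theory.
Local Open Scope classical_set_scope.
Local Open Scope ring_scope.

Section MAP.
Variables (R : realType) (d p : nat).

(* Z^d is 'rV[int]_d ; the jump matrix is mu : 'I_p -> 'I_p -> Z^d -> R,
   mu i j x = P_{(0,i)}((A_1,M_1) = (x,j)). *)
Definition Zd := 'rV[int]_d.

Definition zdot (x : Zd) (theta : 'rV[R]_d) : R :=
  \sum_(k < d) (x ord0 k)%:~R * theta ord0 k.
Definition znorm (x : Zd) : R := \sum_(k < d) `|x ord0 k|%:~R.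

Definition zsum (f : Zd -> R) : R :=
  fine (\esum_(x in [set: Zd]) ((EFin \o f)^\+ x))%E
  - fine (\esum_(x in [set: Zd]) ((EFin \o f)^\- x))%E.

Variable mu : 'I_p -> 'I_p -> Zd -> R.

Fixpoint mu_pow (n : nat) : 'I_p -> 'I_p -> Zd -> \bar R :=
  match n with
  | 0 => fun i j x => if (i == j) && (x == 0) then 1%E else 0%E
  | n.+1 => fun i j y =>
      (\sum_(k < p) \esum_(z in [set: Zd]) (mu_pow n i k z * (mu k j (y - z))%:E))%E
  end.

(* P_s(Z_n = t) for states s = (x,i), t = (y,j) of the Markov-additive chain *)
Definition trans (n : nat) (s t : Zd * 'I_p) : \bar R :=
  mu_pow n s.2 t.2 (t.1 - s.1).

Definition is_MAP_kernel : Prop :=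
  (forall i j x, 0 <= mu i j x) /\
  (forall i, (\sum_(j < p) \esum_(x in [set: Zd]) (mu i j x)%:E)%E = 1%E).

Definition irreducible : Prop :=
  forall s t : Zd * 'I_p, exists n, (0 < trans n s t)%E.

(* gcd {n >= 1 : P_s(Z_n = s) > 0} = 1 for every state s, i.e. 1 is the only
   common divisor of that set *)
Definition aperiodic : Prop :=
  forall (s : Zd * 'I_p) (k : nat),
    (forall n : nat, (0 < n)%N -> (0 < trans n s s)%E -> (k %| n)%N) -> k = 1%N.

Definition finite_exp_moments : Prop :=
  forall i j (alpha : R), 0 < alpha ->
    (\esum_(x in [set: Zd]) (expR (alpha * znorm x) * mu i j x)%:E < +oo)%E.

Definition fourier (theta : 'rV[R]_d) : 'M[R[i]]_p :=
  \matrix_(i < p, j < p)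
    Complex (zsum (fun x => mu i j x * cos (zdot x theta)))
            (zsum (fun x => mu i j x * sin (zdot x theta))).

End MAP.

Definition spectral_radius (R : realType) (p : nat) (A : 'M[R[i]]_p) : R :=
  sup [set ComplexField.Normc.normc l | l in [set l : R[i] | eigenvalue A l]].

(** Let [v] be a left eigenvector of [fourier mu theta] for an eigenvalue
   [lam] with [|lam| >= 1], and let [P i j] be the total mass of [mu i j].
   The triangle inequality gives [|lam| |v_j| <= sum_i |v_i| P i j]; summing
   over [j] and using that the rows of [P] sum to [1] forces [|lam| = 1] and
   equality throughout.  Equality in the triangle inequality means that
   [phase v_i * e^(i y.theta) = lam * phase v_j] whenever [mu i j y > 0], so
   along a path of length [n] from [(0, i)] to [(y, j)] we get
   [phase v_i * e^(i y.theta) = lam ^+ n * phase v_j].  Returning to the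
   starting state gives [lam ^+ n = 1] for all return times, so [lam = 1] by
   aperiodicity; reaching the unit vectors [e_k] by irreducibility gives
   [e^(i theta_k) = 1], i.e. [theta = 0] on [[-pi, pi]^d]. *)

From HB Require Import structures.
From mathcomp Require Import all_boot all_order all_algebra.
From mathcomp.real_closed Require Import complex.
From mathcomp Require Import all_classical all_reals.
From mathcomp Require Import ereal topology normedtype sequences numfun esum exp trigo.
From mathcomp Require Import ring lra.
Import Order.TTheory GRing.Theory Num.Theory.
Local Open Scope ring_scope.

Set Implicit Arguments.
Unset Strict Implicit.
Unset Printing Implicit Defensive.

Local Notation normc := ComplexField.Normc.normc.
Local Notation Re := (@complex.Re _).
Local Notation Im := (@complex.Im _).

Section real_summation.
Variables (R : realType) (T : choiceType).
Implicit Types (f g h : T -> R) (c : R).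

Definition rsum f : R := fine (\esum_(x in [set: T]) (f x)%:E).

Lemma esum_EFinZl c f : 0 <= c ->
  \esum_(x in [set: T]) (c * f x)%:E = (c%:E * \esum_(x in [set: T]) (f x)%:E)%E.
Proof.
move=> c0; rewrite /esum -ereal_supZl//; last first.
  by apply/set0P; exists 0%E, set0; [exact: fsets_set0|rewrite fsbig_set0].
congr ereal_sup; apply/seteqP; split=> y /=.
  move=> [A [finA _] <-]; exists (\sum_(x \in A) (f x)%:E)%E; first by exists A.
  by rewrite !fsumEFin// -EFinM mulr_fsumr.
move=> [_ [A [finA _] <-] <-]; exists A => //.
by rewrite !fsumEFin// -EFinM mulr_fsumr.
Qed.

Lemma summable_le f g : (forall x, `|f x| <= `|g x|) ->
  summable [set: T] (EFin \o g) -> summable [set: T] (EFin \o f).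
Proof. by move=> fg; apply: le_lt_trans; apply: le_esum => x _; rewrite lee_fin. Qed.

Lemma summableZ c f : summable [set: T] (EFin \o f) ->
  summable [set: T] (EFin \o (fun x => c * f x)).
Proof.
move=> sf; rewrite /summable; under eq_esum do rewrite /= normrM.
rewrite esum_EFinZl//; move: sf; rewrite summableE => /fineK <-.
by rewrite -EFinM ltry.
Qed.

Lemma summable_mulr_bounded g h (M : R) : (forall x, `|h x| <= M) ->
  summable [set: T] (EFin \o g) -> summable [set: T] (EFin \o (fun x => g x * h x)).
Proof.
move=> hM sg; apply: (summable_le (g := fun x => M * g x)); last exact: summableZ.
by move=> x; rewrite !normrM [`|M| * _]mulrC ler_wpM2l// (le_trans (hM x)) ?ler_norm.
Qed.

Lemma ge0_esum_fin_num g : (forall x, 0 <= g x) ->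
  summable [set: T] (EFin \o g) -> \esum_(x in [set: T]) (g x)%:E \is a fin_num.
Proof.
move=> g0; rewrite summableE; congr (_ \is a fin_num).
by apply: eq_esum => x _ /=; rewrite ger0_norm.
Qed.

Lemma rsum_ge0 g : (forall x, 0 <= g x) -> 0 <= rsum g.
Proof. by move=> g0; apply: fine_ge0; apply: esum_ge0 => x _; rewrite lee_fin. Qed.

Lemma rsum_ge g x : (forall x, 0 <= g x) -> summable [set: T] (EFin \o g) ->
  g x <= rsum g.
Proof.
move=> g0 sg; rewrite -lee_fin /rsum fineK ?ge0_esum_fin_num//.
apply: esum_ge; exists [set x]%classic; last by rewrite fsbig_set1.
by split=> //; exact: finite_set1.
Qed.

Lemma rsum_eq0 g : (forall x, 0 <= g x) -> summable [set: T] (EFin \o g) ->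
  rsum g = 0 -> forall x, g x = 0.
Proof. by move=> g0 sg sg0 x; apply/eqP; rewrite eq_le g0 andbT -sg0 rsum_ge. Qed.

Lemma rsumD g h : (forall x, 0 <= g x) -> (forall x, 0 <= h x) ->
  summable [set: T] (EFin \o g) -> summable [set: T] (EFin \o h) ->
  rsum (g + h) = rsum g + rsum h.
Proof.
move=> g0 h0 sg sh; rewrite /rsum -fineD ?ge0_esum_fin_num//.
under eq_esum do rewrite [(g + h) _]/= EFinD.
by rewrite esumD// => x _; rewrite lee_fin.
Qed.

Lemma rsumZ c g : 0 <= c -> (forall x, 0 <= g x) ->
  summable [set: T] (EFin \o g) -> rsum (fun x => c * g x) = c * rsum g.
Proof. by move=> c0 g0 sg; rewrite /rsum esum_EFinZl// fineM ?ge0_esum_fin_num. Qed.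

Lemma funrposBnegE f x : f x = f^\+ x - f^\- x.
Proof. by rewrite -[in LHS](funrposBneg f). Qed.

Lemma EFin_funrpos f : EFin \o f^\+ = (EFin \o f)^\+%E.
Proof. by apply/funext => x /=; rewrite funeposE -EFin_max. Qed.

Lemma EFin_funrneg f : EFin \o f^\- = (EFin \o f)^\-%E.
Proof. by apply/funext => x /=; rewrite funenegE -EFin_max. Qed.

Lemma summable_funrpos f :
  summable [set: T] (EFin \o f) -> summable [set: T] (EFin \o f^\+).
Proof. by rewrite EFin_funrpos; exact: summable_funepos. Qed.

Lemma summable_funrneg f :
  summable [set: T] (EFin \o f) -> summable [set: T] (EFin \o f^\-).
Proof. by rewrite EFin_funrneg; exact: summable_funeneg. Qed.

End real_summation.

Section zsum_linear.
Variables (R : realType) (d : nat).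
Implicit Types (f g h : Zd d -> R) (c : R).

Lemma zsumE f : zsum f = rsum f^\+ - rsum f^\-.
Proof. by rewrite /zsum /rsum -EFin_funrpos -EFin_funrneg. Qed.

Lemma ge0_zsum g : (forall x, 0 <= g x) -> zsum g = rsum g.
Proof.
move=> g0; rewrite zsumE.
have -> : g^\+ = g by apply/funext => x; exact/max_idPl.
have -> : g^\- = cst 0 by apply/funext => x; apply/max_idPr; rewrite oppr_le0.
by rewrite [rsum (cst 0)]/rsum esum1 ?subr0.
Qed.

Lemma zsum_split f g h : (forall x, f x = g x - h x) ->
  (forall x, 0 <= g x) -> (forall x, 0 <= h x) ->
  summable [set: Zd d] (EFin \o g) -> summable [set: Zd d] (EFin \o h) ->
  zsum f = rsum g - rsum h.
Proof.
move=> fE g0 h0 sg sh.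
have sf : summable [set: Zd d] (EFin \o f).
  apply: (summable_le (g := g + h)); last exact: (summableD sg sh).
  move=> x /=; rewrite fE [X in _ <= X]ger0_norm ?addr_ge0//.
  by rewrite (le_trans (ler_normB _ _))// !ger0_norm.
have sfp := summable_funrpos sf; have sfn := summable_funrneg sf.
have : rsum (f^\+ + h) = rsum (g + f^\-).
  by congr rsum; apply/funext => x; move: (fE x); rewrite funrposBnegE !fctE; lra.
by rewrite !rsumD// zsumE; lra.
Qed.

Lemma zsumD f g : summable [set: Zd d] (EFin \o f) -> summable [set: Zd d] (EFin \o g) ->
  zsum (fun x => f x + g x) = zsum f + zsum g.
Proof.
move=> sf sg; rewrite [zsum f]zsumE [zsum g]zsumE.
have [sfp sfn] := (summable_funrpos sf, summable_funrneg sf).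
have [sgp sgn] := (summable_funrpos sg, summable_funrneg sg).
rewrite (@zsum_split _ (f^\+ + g^\+) (f^\- + g^\-)) ?rsumD//; first by ring.
- by move=> x; rewrite (funrposBnegE f) (funrposBnegE g) !fctE; ring.
- by move=> x; rewrite fctE addr_ge0.
- by move=> x; rewrite fctE addr_ge0.
- exact: (summableD sfp sgp).
- exact: (summableD sfn sgn).
Qed.

Lemma zsumZ c f : summable [set: Zd d] (EFin \o f) ->
  zsum (fun x => c * f x) = c * zsum f.
Proof.
move=> sf; have [sfp sfn] := (summable_funrpos sf, summable_funrneg sf).
rewrite !zsumE; have [c0|c0] := leP 0 c.
  by rewrite ge0_funrposM// ge0_funrnegM// !rsumZ// mulrBr.
rewrite le0_funrposM ?ltW// le0_funrnegM ?ltW// !rsumZ ?oppr_ge0 ?ltW//.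
by ring.
Qed.

End zsum_linear.

Section complex_normc.
Local Open Scope complex_scope.
Variable R : rcfType.
Implicit Types z : R[i].

Lemma normc_ge0 z : 0 <= normc z.
Proof. by case: z => a b; exact: sqrtr_ge0. Qed.

Lemma normc_eq0 z : (normc z == 0) = (z == 0).
Proof.
apply/eqP/eqP => [/ComplexField.Normc.eq0_normc//|->].
exact: ComplexField.Normc.normc0.
Qed.

Lemma normcC_neq0 z : z != 0 -> (normc z)%:C != 0 :> R[i].
Proof. by move=> z0; rewrite fmorph_eq0 normc_eq0. Qed.

Lemma normc_conj z : normc z^* = normc z.
Proof. by case: z => a b /=; rewrite sqrrN. Qed.

Lemma sqr_normc z : normc z ^+ 2 = Re z ^+ 2 + Im z ^+ 2.
Proof. by case: z => a b /=; rewrite sqr_sqrtr// addr_ge0// sqr_ge0. Qed.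

Lemma mulJc z : z^* * z = (normc z ^+ 2)%:C.
Proof.
rewrite sqr_normc; case: z => a b; rewrite /GRing.mul /=.
by apply/eqP; rewrite eq_complex /=; apply/andP; split; apply/eqP; ring.
Qed.

Lemma Re_le_normc z : Re z <= normc z.
Proof.
case: z => a b /=; apply: le_trans (ler_norm a) _.
by rewrite -sqrtr_sqr ler_wsqrtr// lerDl sqr_ge0.
Qed.

Lemma Re_eq_normc z : Re z = normc z -> z = (normc z)%:C.
Proof.
move=> Rez; have /eqP : Im z ^+ 2 = 0 by move: (sqr_normc z); rewrite -Rez; lra.
by rewrite sqrf_eq0 => /eqP Imz0; apply/eqP; rewrite eq_complex /= -Rez Imz0 !eqxx.
Qed.

Lemma Re_sum (I : finType) (F : I -> R[i]) : Re (\sum_i F i) = \sum_i Re (F i).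
Proof. exact: (@raddf_sum _ _ (@complex.Re R : Rcomplex R -> R)). Qed.

Definition phase z : R[i] := z / (normc z)%:C.

Lemma phase_eq0 z : (phase z == 0) = (z == 0).
Proof.
have [->|z0] := eqVneq z 0; first by rewrite /phase mul0r eqxx.
by rewrite /phase mulf_eq0 invr_eq0 (negbTE z0) (negbTE (normcC_neq0 z0)).
Qed.

End complex_normc.

Section character.
Local Open Scope complex_scope.
Variables (R : realType) (d : nat) (theta : 'rV[R]_d).

Definition expi (x : Zd d) : R[i] := cos (zdot x theta) +i* sin (zdot x theta).

Lemma zdotD (x y : Zd d) : zdot (x + y) theta = zdot x theta + zdot y theta.
Proof. by rewrite /zdot -big_split; apply: eq_bigr => k _; rewrite !mxE intrD mulrDl. Qed.

Lemma zdot0 : zdot (0 : Zd d) theta = 0.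
Proof. by rewrite /zdot big1// => k _; rewrite mxE mul0r. Qed.

Lemma zdot_delta (k : 'I_d) : zdot (delta_mx 0 k) theta = theta 0 k.
Proof.
rewrite /zdot (bigD1 k)//= big1 => [|m /negbTE mk]; rewrite !mxE eqxx /=.
  by rewrite mul1r addr0.
by rewrite mk mul0r.
Qed.

Lemma expiD x y : expi (x + y) = expi x * expi y.
Proof.
by rewrite /expi zdotD cosD sinD; apply/eqP; rewrite eq_complex /= eqxx addrC eqxx.
Qed.

Lemma expi0 : expi 0 = 1.
Proof. by rewrite /expi zdot0 cos0 sin0. Qed.

Lemma normc_expi x : normc (expi x) = 1.
Proof. by rewrite /= cos2Dsin2 sqrtr1. Qed.

Lemma Re_mul_expi c x :
  Re (c * expi x) = Re c * cos (zdot x theta) - Im c * sin (zdot x theta).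
Proof. by case: c. Qed.

End character.

Section fourier_kernel.
Local Open Scope complex_scope.
Variables (R : realType) (d p : nat) (mu : 'I_p -> 'I_p -> Zd d -> R).
Hypothesis muK : is_MAP_kernel mu.
Variable theta : 'rV[R]_d.
Local Notation expi := (expi theta).

Let mu_ge0 : forall i j x, 0 <= mu i j x := muK.1.

Lemma summable_mu i j : summable [set: Zd d] (EFin \o mu i j).
Proof.
case: muK => _ mu1; rewrite /summable; under eq_esum do rewrite /= ger0_norm//.
apply: (@le_lt_trans _ _ 1%E); last exact: ltey.
rewrite -(mu1 i) (bigD1 j)//= leeDl// sume_ge0// => k _.
by apply: esum_ge0 => x _; rewrite lee_fin.
Qed.

Lemma rsum_mu_row i : \sum_j rsum (mu i j) = 1.
Proof.
apply: EFin_inj; rewrite -sumEFin -(muK.2 i); apply: eq_bigr => j _.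
by rewrite /rsum fineK// ge0_esum_fin_num// summable_mu.
Qed.

Lemma mu_mul_ReE c i j : (fun x => mu i j x * Re (c * expi x)) =
  (fun x => Re c * (mu i j x * cos (zdot x theta)) +
            - Im c * (mu i j x * sin (zdot x theta))).
Proof. by apply/funext => x; rewrite Re_mul_expi; ring. Qed.

Lemma summable_mu_Re c i j :
  summable [set: Zd d] (EFin \o (fun x => mu i j x * Re (c * expi x))).
Proof.
rewrite mu_mul_ReE; apply: (summableD (summableZ _ _) (summableZ _ _)).
  by apply: (summable_mulr_bounded (M := 1)) (summable_mu i j) => x; exact: cos_max.
by apply: (summable_mulr_bounded (M := 1)) (summable_mu i j) => x; exact: sin_max.
Qed.

Lemma Re_mul_fourier c i j :
  Re (c * fourier mu theta i j) = zsum (fun x => mu i j x * Re (c * expi x)).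
Proof.
have summable_cos :=
  summable_mulr_bounded (fun x => cos_max (zdot x theta)) (summable_mu i j).
have summable_sin :=
  summable_mulr_bounded (fun x => sin_max (zdot x theta)) (summable_mu i j).
rewrite mu_mul_ReE zsumD ?summableZ// !zsumZ// mxE.
by case: c => a b /=; ring.
Qed.

(* Summed over [x], the defect is the gap in [Re (c * A_ij) <= |c| P_ij]; its
   pointwise nonnegativity replaces the triangle inequality for the infinite
   sum defining [A_ij], and its vanishing at [x] is the equality case. *)
Definition fourier_defect c i j (x : Zd d) : R :=
  mu i j x * (normc c - Re (c * expi x)).

Lemma fourier_defect_ge0 c i j x : 0 <= fourier_defect c i j x.
Proof.
rewrite /fourier_defect mulr_ge0// subr_ge0 (le_trans (Re_le_normc _))//.
by rewrite ComplexField.Normc.normcM normc_expi mulr1.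
Qed.

Lemma fourier_defectE c i j : fourier_defect c i j =
  (fun x => normc c * mu i j x + (-1) * (mu i j x * Re (c * expi x))).
Proof. by apply/funext => x; rewrite /fourier_defect; ring. Qed.

Lemma summable_fourier_defect c i j :
  summable [set: Zd d] (EFin \o fourier_defect c i j).
Proof.
rewrite fourier_defectE.
exact: (summableD (summableZ _ (summable_mu i j)) (summableZ _ (summable_mu_Re c i j))).
Qed.

Lemma rsum_fourier_defect c i j :
  rsum (fourier_defect c i j) = normc c * rsum (mu i j) - Re (c * fourier mu theta i j).
Proof.
rewrite -ge0_zsum; last exact: fourier_defect_ge0.
rewrite fourier_defectE zsumD ?summableZ ?summable_mu ?summable_mu_Re//.
by rewrite !zsumZ ?summable_mu ?summable_mu_Re// ge0_zsum// Re_mul_fourier; ring.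
Qed.

Section left_eigenvector.
Variables (lam : R[i]) (v : 'rV[R[i]]_p).
Hypothesis eig : v *m fourier mu theta = lam *: v.
Local Notation P i j := (rsum (mu i j)).
Local Notation c j i := ((lam * v 0 j)^* * v 0 i).

Lemma eigen_coord j : \sum_i v 0 i * fourier mu theta i j = lam * v 0 j.
Proof.
have := congr1 (fun M : 'rV_p => M 0 j) eig; rewrite !mxE => <-.
by apply: eq_bigr => i _; rewrite !mxE.
Qed.

Lemma sum_rsum_defect j : \sum_i rsum (fourier_defect (c j i) i j) =
  normc (lam * v 0 j) * (\sum_i normc (v 0 i) * P i j - normc (lam * v 0 j)).
Proof.
under eq_bigr do rewrite rsum_fourier_defect.
rewrite sumrB mulrBr mulr_sumr; congr (_ - _).
  by apply: eq_bigr => i _; rewrite ComplexField.Normc.normcM normc_conj mulrA.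
rewrite -Re_sum (_ : \sum_i _ = (lam * v 0 j)^* * (lam * v 0 j)).
  by rewrite mulJc /= expr2.
by rewrite -eigen_coord mulr_sumr; apply: eq_bigr => i _; rewrite mulrA.
Qed.

Lemma normc_eigen_le j : normc lam * normc (v 0 j) <= \sum_i normc (v 0 i) * P i j.
Proof.
have P_ge0 i : 0 <= P i j by exact: rsum_ge0.
rewrite -ComplexField.Normc.normcM.
have [S0|S0] := eqVneq (lam * v 0 j) 0.
  by rewrite S0 ComplexField.Normc.normc0 sumr_ge0// => i _; rewrite mulr_ge0 ?normc_ge0.
have S_gt0 : 0 < normc (lam * v 0 j) by rewrite lt_def normc_eq0 S0 normc_ge0.
rewrite -subr_ge0 -(pmulr_rge0 _ S_gt0) -sum_rsum_defect.
by apply: sumr_ge0 => i _; apply: rsum_ge0 => x; exact: fourier_defect_ge0.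
Qed.

Hypotheses (v_neq0 : v != 0) (lam_ge1 : 1 <= normc lam).

Lemma eigen_balance :
  normc lam = 1 /\ forall j, normc (v 0 j) = \sum_i normc (v 0 i) * P i j.
Proof.
pose gap j := \sum_i normc (v 0 i) * P i j - normc lam * normc (v 0 j).
have gap_ge0 j : 0 <= gap j by rewrite subr_ge0 normc_eigen_le.
have gap_sum : \sum_j gap j = (1 - normc lam) * \sum_i normc (v 0 i).
  rewrite sumrB exchange_big /= mulrBl mul1r -mulr_sumr; congr (_ - _).
  by apply: eq_bigr => i _; rewrite -mulr_sumr rsum_mu_row mulr1.
have [i0 vi0] := rV0Pn _ v_neq0.
have v_gt0 : 0 < \sum_i normc (v 0 i).
  rewrite (bigD1 i0)//= ltr_pwDl ?sumr_ge0// => [|i _]; last exact: normc_ge0.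
  by rewrite lt_def normc_eq0 vi0 normc_ge0.
have gap_sum0 : \sum_j gap j = 0.
  apply/eqP; rewrite eq_le sumr_ge0 ?andbT// gap_sum.
  by rewrite pmulr_lle0// subr_le0.
have lam1 : normc lam = 1.
  move: gap_sum0; rewrite gap_sum => /eqP; rewrite mulf_eq0 (gt_eqF v_gt0) orbF.
  by rewrite subr_eq0 => /eqP <-.
split=> // j; apply/eqP; rewrite eq_sym -subr_eq0 -[normc (v 0 j)]mul1r -lam1.
by apply/eqP; exact: (psumr_eq0P (fun j _ => gap_ge0 j) gap_sum0).
Qed.

Lemma eigen_phase_shift i j y : v 0 i != 0 -> 0 < mu i j y ->
  v 0 j != 0 /\ phase (v 0 i) * expi y = lam * phase (v 0 j).
Proof.
have [lam1 balance] := eigen_balance.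
move=> vi0 mu_gt0.
have vj0 : v 0 j != 0.
  have P_gt0 : 0 < P i j := lt_le_trans mu_gt0 (rsum_ge y (mu_ge0 i j) (summable_mu i j)).
  have vi_gt0 : 0 < normc (v 0 i) by rewrite lt_def normc_eq0 vi0 normc_ge0.
  rewrite -normc_eq0 balance (bigD1 i)//= gt_eqF// ltr_pwDl ?mulr_gt0 ?sumr_ge0//.
  by move=> k _; rewrite mulr_ge0 ?normc_ge0 ?rsum_ge0.
split=> //.
have defect0 : rsum (fourier_defect (c j i) i j) = 0.
  apply: (psumr_eq0P (P := predT) (fun k _ => rsum_ge0 (fourier_defect_ge0 _ k j))) => //.
  by rewrite sum_rsum_defect ComplexField.Normc.normcM lam1 mul1r -balance subrr mulr0.
have := rsum_eq0 (fourier_defect_ge0 _ i j) (summable_fourier_defect _ i j) defect0 y.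
rewrite /fourier_defect => /eqP; rewrite mulf_eq0 (gt_eqF mu_gt0) subr_eq0 => /eqP ReE.
set na := (normc (v 0 i))%:C; set nb := (normc (v 0 j))%:C.
have real : c j i * expi y = nb * na.
  rewrite [LHS]Re_eq_normc; last first.
    by apply: etrans (esym ReE) _; rewrite !ComplexField.Normc.normcM normc_expi mulr1.
  rewrite !ComplexField.Normc.normcM normc_expi normc_conj ComplexField.Normc.normcM.
  by rewrite lam1 mulr1 mul1r rmorphM.
have lamJ : lam^* * lam = 1 by rewrite mulJc lam1 expr1n.
have key : nb ^+ 2 * (v 0 i * expi y) = lam * v 0 j * (nb * na).
  have bJ : (v 0 j)^* * v 0 j = nb ^+ 2 by rewrite mulJc rmorphXn.
  by rewrite -bJ -real -[LHS]mul1r -lamJ rmorphM; ring.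
have na0 : na != 0 by exact: normcC_neq0.
have nb0 : nb != 0 by exact: normcC_neq0.
rewrite /phase -/na -/nb.
have -> : v 0 i / na * expi y = nb ^+ 2 * (v 0 i * expi y) / (nb ^+ 2 * na).
  by field; rewrite na0 nb0.
by rewrite key; field; rewrite na0 nb0.
Qed.

End left_eigenvector.
End fourier_kernel.

Lemma esum_gt0_ex (R : realType) (T : choiceType) (a : T -> \bar R) :
  (0 < \esum_(x in [set: T]) a x)%E -> exists x, (0 < a x)%E.
Proof.
apply: contraPP => /forallNP a_le0; apply/negP; rewrite -leNgt.
by apply: ge_ereal_sup => _ [A _ <-]; apply: fsume_le0 => x _; rewrite leNgt; exact/negP.
Qed.

Lemma sume_gt0_ex (R : realType) (I : finType) (F : I -> \bar R) :
  (0 < \sum_i F i)%E -> exists i, (0 < F i)%E.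
Proof.
apply: contraPP => /forallNP F_le0; apply/negP; rewrite -leNgt.
by apply: sume_le0 => i _; rewrite leNgt; exact/negP.
Qed.

Section kernel_paths.
Variables (R : realType) (d p : nat) (mu : 'I_p -> 'I_p -> Zd d -> R).
Hypothesis mu_ge0 : forall i j x, 0 <= mu i j x.

Lemma mu_pow_ge0 n i j y : (0 <= mu_pow mu n i j y)%E.
Proof.
elim: n j y => [|n IH] j y /=; first by case: ifP.
by apply: sume_ge0 => k _; apply: esum_ge0 => z _; rewrite mule_ge0 ?lee_fin.
Qed.

Lemma mu_pow_succ_gt0 n i j y : (0 < mu_pow mu n.+1 i j y)%E ->
  exists k z, (0 < mu_pow mu n i k z)%E /\ 0 < mu k j (y - z).
Proof.
move=> /sume_gt0_ex [k] /esum_gt0_ex [z].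
by rewrite mule_ge0_gt0 ?mu_pow_ge0 ?lee_fin// lte_fin => /andP[]; exists k, z.
Qed.

Variables (theta : 'rV[R]_d) (lam : R[i]) (w : 'I_p -> R[i]).
Hypothesis w_step : forall i j y, w i != 0 -> 0 < mu i j y ->
  w j != 0 /\ w i * expi theta y = lam * w j.

Lemma phase_along_paths n i j y : w i != 0 -> (0 < mu_pow mu n i j y)%E ->
  w j != 0 /\ w i * expi theta y = lam ^+ n * w j.
Proof.
move=> wi0; elim: n j y => [|n IH] j y.
  by rewrite /=; case: ifPn => [/andP[/eqP <- /eqP ->] _|_]; rewrite ?ltxx// expi0 mulr1 mul1r.
move=> /mu_pow_succ_gt0 [k [z [/IH [wk0 wk] /(w_step wk0) [wj0 wj]]]].
by split=> //; rewrite -(subrK z y) addrC expiD mulrA wk -mulrA wj exprSr mulrA.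
Qed.

End kernel_paths.

Lemma pow_eq1_gcd1 (F : pzRingType) (S : nat -> Prop) (z : F) :
  (forall k, (forall n, (0 < n)%N -> S n -> (k %| n)%N) -> k = 1%N) ->
  (forall n, (0 < n)%N -> S n -> z ^+ n = 1) -> z = 1.
Proof.
move=> gcd1 zS.
have [period|no_period] := pselect (exists m, (0 < m)%N && (z ^+ m == 1)); last first.
  (* then [S] has no positive element and the gcd hypothesis fails at [k = 0] *)
  suff : 0%N = 1%N by [].
  apply: gcd1 => n n_gt0 Sn; case: no_period; exists n.
  by rewrite n_gt0 (zS n n_gt0 Sn) eqxx.
case: (ex_minnP period) => k /andP[k_gt0 /eqP zk] kmin.
suff k1 : k = 1%N by move: zk; rewrite k1 expr1.
apply: gcd1 => n n_gt0 Sn; apply/negPn/negP => n_mod_k.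
have zr : z ^+ (n %% k) = 1.
  by move: (zS n n_gt0 Sn); rewrite {1}(divn_eq n k) exprD mulnC exprM zk expr1n mul1r.
have := kmin (n %% k)%N; rewrite lt0n n_mod_k zr eqxx => /(_ isT).
by rewrite leqNgt ltn_pmod.
Qed.

Lemma cos_eq1_pi (R : realType) (x : R) : - pi <= x <= pi -> cos x = 1 -> x = 0.
Proof.
move=> /andP[x_ge x_le] cx; apply/normr0_eq0/cos_inj; rewrite ?cos_norm ?cos0//.
  by rewrite in_itv /= normr_ge0 ler_norml x_ge x_le.
by rewrite in_itv /= lexx pi_ge0.
Qed.

Lemma spectral_radius_lt (R : realType) (p : nat) (A : 'M[R[i]]_p) (r : R) : 0 < r ->
  (forall l, eigenvalue A l -> normc l < r) -> spectral_radius A < r.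
Proof.
move=> r_gt0 eig_lt; have [rs charA] := closed_field_poly_normal (char_poly A).
have eig_rs l : eigenvalue A l -> l \in rs.
  rewrite eigenvalue_root_char charA (monicP (char_poly_monic A)) scale1r.
  by rewrite root_prod_XsubC.
rewrite /spectral_radius; set E := [set _ | _ in _]%classic.
have [->|/set0P E_neq0] := eqVneq E set0; first by rewrite sup0.
apply: (le_lt_trans (y := \big[Num.max/0]_(l <- rs | eigenvalue A l) normc l)).
  by apply: ge_sup E_neq0 _ => _ [l el <-]; apply: le_bigmax_seq => //; exact: eig_rs.
exact: bigmax_lt.
Qed.

Lemma fourier_eigenvalue_lt1 (R : realType) (d p : nat) (mu : 'I_p -> 'I_p -> Zd d -> R) :
  is_MAP_kernel mu -> irreducible mu -> aperiodic mu ->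
  forall theta : 'rV[R]_d, (forall k : 'I_d, - pi <= theta ord0 k <= pi) -> theta != 0 ->
  forall l, eigenvalue (fourier mu theta) l -> normc l < 1.
Proof.
move=> muK irr aper theta theta_box theta_neq0 l /eigenvalueP [v eig v_neq0].
rewrite ltNge; apply/negP => l_ge1.
pose w i := phase (v 0 i).
have w_step i j y : w i != 0 -> 0 < mu i j y -> w j != 0 /\ w i * expi theta y = l * w j.
  by rewrite /w !phase_eq0; exact: eigen_phase_shift.
have [i0 vi0] := rV0Pn _ v_neq0.
have wi0 : w i0 != 0 by rewrite phase_eq0.
have walk := phase_along_paths muK.1 w_step wi0.
have l1 : l = 1.
  pose s0 : Zd d * 'I_p := (0, i0).
  apply: (pow_eq1_gcd1 (S := fun n => 0 < trans mu n s0 s0)%E) => [k|n _].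
    exact: aper.
  rewrite /trans subrr => /walk [_]; rewrite expi0 mulr1 -{1}[w i0]mul1r.
  by move=> /(mulIf wi0) /esym.
move/negP: theta_neq0; apply; apply/eqP/rowP => k; rewrite mxE.
have [n] := irr (0, i0) (delta_mx 0 k, i0).
rewrite /trans subr0 => /walk [_]; rewrite l1 expr1n mul1r -[RHS]mulr1 => /(mulfI wi0).
by rewrite /expi zdot_delta => /(congr1 Re) /=; apply: cos_eq1_pi.
Qed.

Unset Implicit Arguments.
Set Strict Implicit.

Theorem lemma2p1 (R : realType) (d p : nat) (hd : (1 <= d)%N) (hp : (1 <= p)%N)
  (mu : 'I_p -> 'I_p -> Zd d -> R) :
  is_MAP_kernel mu ->
  irreducible mu ->
  aperiodic mu ->
  finite_exp_moments mu ->
  forall theta : 'rV[R]_d,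
    (forall k : 'I_d, - pi <= theta ord0 k <= pi) ->
    theta != 0 ->
    spectral_radius (fourier mu theta) < 1.
Proof.
move=> muK irr aper _ theta theta_box theta_neq0.
apply: spectral_radius_lt ltr01 _.
exact: fourier_eigenvalue_lt1.
Qed.
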